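(* Let $n,m,p$ be positive integers and $A\in\mathbb{R}^{n\times n}$, $B\in\mathbb{R}^{n\times m}$, $C\in\mathbb{R}^{p\times n}$, $D\in\mathbb{R}^{p\times m}$ with $DD^T$ positive definite and $BD^T=0$. Fix $\tau\in[0,1]$, $c>0$, $V_0\in\mathcal{Q}_+^n$, and let $P_k,V_k,\theta_k$ be generated by the robust Kalman filter with parameter $\tau$ and tolerance $c$; set $\Phi_k=P_{k+1}^{-1}-V_{k+1}^{-1}$. Let $k\ge0$ and let $\bar d>0$ be such that $P_{k+1}\ge\bar dI_n$. Then $$\Phi_k\le\begin{cases}\dfrac{1-(1-\theta_k(1-\tau)\bar d)^{\frac1{1-\tau}}}{\bar d}\,I_n, & 0\le\tau<1,\\[3mm] \dfrac{1-\exp(-\theta_k\bar d)}{\bar d}\,I_n, & \tau=1.\end{cases}$$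
   Context: $\mathcal{Q}_+^n$ denotes the real symmetric positive definite $n\times n$ matrices; $\le$ is the Loewner order; $\|\cdot\|$ the spectral norm. For $P$ positive semidefinite, $L_P$ is any matrix with $P=L_PL_P^T$; matrix powers and $\exp$ of symmetric matrices are defined through eigendecomposition. The function $\gamma_\tau$: for positive semidefinite $P$ and $\theta\ge0$ with $\theta(1-\tau)\|P\|<1$, $\gamma_0(P,\theta)=-\log\det((I_n-\theta P)^{-1})+\mathrm{tr}((I_n-\theta P)^{-1}-I_n)$; for $0<\tau<1$, $\gamma_\tau(P,\theta)=\mathrm{tr}\big(-\frac{1}{\tau(1-\tau)}(I_n-\theta(1-\tau)L_P^TL_P)^{\frac{\tau}{\tau-1}}+\frac1{1-\tau}(I_n-\theta(1-\tau)L_P^TL_P)^{\frac{1}{\tau-1}}+\frac1\tau I_n\big)$; $\gamma_1(P,\theta)=\mathrm{tr}(\exp(\theta L_P^TL_P)(\theta L_P^TL_P-I_n)+I_n)$. Robust Kalman filter with parameter $\tau$ and tolerance $c$: for $k=0,1,\dots$, $P_{k+1}=A(V_k^{-1}+C^T(DD^T)^{-1}C)^{-1}A^T+BB^T$; $\theta_k$ is the unique $\theta>0$ with $\theta(1-\tau)\|P_{k+1}\|<1$ and $\gamma_\tau(P_{k+1},\theta)=c$; $V_{k+1}=L_{P_{k+1}}(I_n-\theta_k(1-\tau)L_{P_{k+1}}^TL_{P_{k+1}})^{\frac1{\tau-1}}L_{P_{k+1}}^T$ if $0\le\tau<1$ and $V_{k+1}=L_{P_{k+1}}\exp(\theta_kL_{P_{k+1}}^TL_{P_{k+1}})L_{P_{k+1}}^T$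 if $\tau=1$. *)

From HB Require Import structures.
From mathcomp Require Import all_boot all_order all_algebra.
From mathcomp Require Import classical_sets boolp reals sequences exp.
Set Implicit Arguments. Unset Strict Implicit. Unset Printing Implicit Defensive.
Import Order.TTheory GRing.Theory Num.Theory.
Local Open Scope ring_scope.
Local Open Scope classical_set_scope.

Section Defs.
Variable R : realType.

Definition psd n (M : 'M[R]_n) : Prop :=
  M^T = M /\ forall x : 'cV[R]_n, 0 <= (x^T *m M *m x) 0 0.
Definition pd n (M : 'M[R]_n) : Prop :=
  M^T = M /\ forall x : 'cV[R]_n, x != 0 -> 0 < (x^T *m M *m x) 0 0.

Definition loewner n (A B : 'M[R]_n) : Prop := psd (B - A).

Definition vnorm n (x : 'cV[R]_n) : R := Num.sqrt (\sum_i x i 0 ^+ 2).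
Definition specnorm n m (M : 'M[R]_(n, m)) : R :=
  sup [set vnorm (M *m x) | x in [set x : 'cV[R]_m | vnorm x = 1]].

Definition eigdec n (S : 'M[R]_n) : 'M[R]_n * 'rV[R]_n :=
  xget (1%:M, 0) [set p | p.1^T *m p.1 = 1%:M /\
                          S = p.1 *m diag_mx p.2 *m p.1^T].

Definition mfun n (f : R -> R) (S : 'M[R]_n) : 'M[R]_n :=
  let p := eigdec S in p.1 *m diag_mx (map_mx f p.2) *m p.1^T.

Definition Lfac n (P : 'M[R]_n) : 'M[R]_n := xget 0 [set L | P = L *m L^T].

Definition gamma n (tau : R) (P : 'M[R]_n) (theta : R) : R :=
  let L := Lfac P in
  if tau == 0 then
    - ln (\det (invmx (1%:M - theta *: P)))
    + \tr (invmx (1%:M - theta *: P) - 1%:M)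
  else if tau < 1 then
    let M := 1%:M - (theta * (1 - tau)) *: (L^T *m L) in
    \tr (- (1 / (tau * (1 - tau))) *: mfun (fun x => powR x (tau / (tau - 1))) M
         + (1 / (1 - tau)) *: mfun (fun x => powR x (1 / (tau - 1))) M
         + (1 / tau) *: 1%:M)
  else
    let M := theta *: (L^T *m L) in
    \tr (mfun expR M *m (M - 1%:M) + 1%:M).

(* one step of V: V_{k+1} from P_{k+1}, theta_k and a factor L of P_{k+1} *)
Definition Vnext n (tau : R) (L : 'M[R]_n) (theta : R) : 'M[R]_n :=
  if tau < 1 then
    L *m mfun (fun x => powR x (1 / (tau - 1)))
             (1%:M - (theta * (1 - tau)) *: (L^T *m L)) *m L^T
  else L *m mfun expR (theta *: (L^T *m L)) *m L^T.

End Defs.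

From HB Require Import structures.
From mathcomp Require Import all_boot all_order all_algebra.
From mathcomp Require Import classical_sets boolp reals sequences exp.
From mathcomp Require Import spectral sesquilinear complex.
From mathcomp Require Import convex hoelder interval_inference.
From mathcomp Require Import ring lra.
Set Implicit Arguments. Unset Strict Implicit. Unset Printing Implicit Defensive.
Import Order.TTheory GRing.Theory Num.Theory.
Local Open Scope ring_scope.

(* Write P = L L^T and diagonalise L^T L = U diag(mu) U^T orthogonally.  With
   X = L U, both P = X X^T and V = X diag(g) X^T are congruent to diagonal
   matrices, g_i = f(mu_i) for the scalar function f defining V, so that
   h I - Phi = X^-T diag(h mu_i - 1 + 1/g_i) X^-1.  The mu_i are the eigenvalues
   of P, hence lie in [dbar, ||P||].  Since 1/f(mu) is
   (1 - theta (1 - tau) mu)^(1/(1-tau)), resp. exp(-theta mu), a convex function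
   equal to 1 at 0, the chord slope (1 - 1/f(mu))/mu decreases in mu, which is
   exactly h mu - 1 + 1/f(mu) >= 0 for h the slope at dbar.
   The orthogonal diagonalisation of real symmetric matrices is obtained from a
   real eigenvalue (complex spectral theorem) and Householder deflation. *)

Section Euclidean.
Variable R : realDomainType.

Lemma mulTmx_self n (x : 'cV[R]_n) : (x^T *m x) 0 0 = \sum_i x i 0 ^+ 2.
Proof. by rewrite mxE; apply: eq_bigr => i _; rewrite mxE expr2. Qed.

Lemma mulTmx_ge0 n (x : 'cV[R]_n) : 0 <= (x^T *m x) 0 0.
Proof. by rewrite mulTmx_self sumr_ge0 // => i _; rewrite sqr_ge0. Qed.

Lemma mulTmx_eq0 n (x : 'cV[R]_n) : ((x^T *m x) 0 0 == 0) = (x == 0).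
Proof.
apply/idP/eqP => [|->]; last by rewrite mulmx0 mxE.
rewrite mulTmx_self psumr_eq0 => [/allP x0|i _]; last exact: sqr_ge0.
apply/matrixP => i j; rewrite ord1 mxE; apply/eqP.
by rewrite -sqrf_eq0; apply: x0; rewrite mem_index_enum.
Qed.

Lemma mulTmx_gt0 n (x : 'cV[R]_n) : x != 0 -> 0 < (x^T *m x) 0 0.
Proof. by move=> x0; rewrite lt0r mulTmx_eq0 x0 mulTmx_ge0. Qed.

End Euclidean.

Section Householder.
Variable R : realFieldType.

Definition e0 n : 'cV[R]_(1 + n) := col_mx 1%:M 0.

Lemma e0_unit n : (e0 n)^T *m e0 n = 1%:M.
Proof. by rewrite tr_col_mx mul_row_col mulmx1 mulmx0 addr0 trmx1. Qed.

Lemma mulTmxC n (u v : 'cV[R]_n) : u^T *m v = v^T *m u.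
Proof.
by apply/matrixP => i j; rewrite !ord1 !mxE; apply: eq_bigr => k _; rewrite !mxE mulrC.
Qed.

Lemma orthomx_e0 n (v : 'cV[R]_(1 + n)) : v^T *m v = 1%:M ->
  exists Q : 'M[R]_(1 + n), Q^T *m Q = 1%:M /\ Q *m e0 n = v.
Proof.
move=> v1; pose w := e0 n - v; pose s := (w^T *m e0 n) 0 0.
have wE : w^T *m e0 n = s%:M by apply: mx11_scalar.
have wwE : w^T *m w = (s *+ 2)%:M.
  have wv : w^T *m v = - (w^T *m e0 n).
    by rewrite /w !linearB /= !mulmxBl e0_unit v1 mulTmxC opprB.
  by rewrite {2}/w mulmxBr wv opprK wE -mulr2n raddfMn.
have [s0|s0] := eqVneq s 0.
  exists 1%:M; rewrite trmx1 mulmx1 mul1mx; split => //; apply/eqP.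
  by rewrite -subr_eq0 -/w -mulTmx_eq0 wwE s0 mul0rn mxE.
(* The Householder reflection along [w]; [w^T w = 2 s] makes it swap [e0] and [v]. *)
pose H := 1%:M - s^-1 *: (w *m w^T).
exists H; split.
  have HT : H^T = H by rewrite /H linearB linearZ /= trmx_mul trmxK trmx1.
  rewrite HT /H mulmxBl mul1mx mulmxBr mulmx1 -!scalemxAl -!scalemxAr scalerA.
  rewrite !mulmxA -[w *m w^T *m w]mulmxA wwE mul_mx_scalar -scalemxAl scalerA.
  rewrite -mulrA mulrnAr mulVf //.
  by rewrite mulr_natr -scalerMnl mulr2n opprB addrK subrK.
rewrite /H mulmxBl mul1mx -scalemxAl -mulmxA wE mul_mx_scalar scalerA mulVf //.
by rewrite scale1r /w opprB addrC subrK.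
Qed.
End Householder.
Arguments e0 {R} n.

Section RealSpectral.
Variable R : rcfType.

(* Over [complex R] the matrix is hermitian, so its spectral decomposition has a
   real diagonal, whose entries are roots of the real characteristic polynomial. *)
Lemma sym_eigenvalue n (S : 'M[R]_n.+1) : S^T = S -> exists r, eigenvalue S r.
Proof.
move=> Ssym; pose SC := map_mx (real_complex R) S.
have SCh : SC \is hermsymmx.
  apply: realsym_hermsym.
    by rewrite qualifE /= expr0 scale1r map_mx_id // /SC map_trmx Ssym.
  by apply/mxOverP => i j; rewrite mxE complex_real.
set a := spectral_diag SC 0 0.
have ev : eigenvalue SC a.
  have /orthomx_spectralP := hermitian_normalmx SCh.
  have Pu := spectral_unit SC; rewrite -/a.
  set P := spectralmx SC => SCE.
  apply/eigenvalueP; exists (row 0 P).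
    have -> : row 0 P *m SC = row 0 (diag_mx (spectral_diag SC) *m P).
      by rewrite -row_mul {1}SCE !mulmxA mulmxV // mul1mx.
    by rewrite row_mul row_diag_mx -scalemxAl -rowE.
  apply: contraTneq Pu => P0; apply/negP => Pu.
  have := congr1 (mulmx^~ (invmx P)) P0.
  rewrite mul0mx -row_mul mulmxV // => /rowP/(_ 0).
  by rewrite !mxE eqxx => /eqP; rewrite oner_eq0.
have aR : a = real_complex R (complex.Re a).
  rewrite complexRe; apply/esym/Creal_ReP.
  exact: mxOverP (hermitian_spectral_diag_real SCh) 0 0.
exists (complex.Re a).
rewrite eigenvalue_root_char -(fmorph_root (real_complex R)) map_char_poly.
by rewrite -eigenvalue_root_char; move: ev; rewrite {1}aR.
Qed.

Lemma sym_unit_eigenvector n (S : 'M[R]_n.+1) : S^T = S ->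
  exists r (u : 'cV[R]_n.+1), u^T *m u = 1%:M /\ S *m u = r *: u.
Proof.
move=> Ssym; have [r /eigenvalueP[v vS v0]] := sym_eigenvalue Ssym.
have N0 : 0 < (v *m v^T) 0 0 by rewrite -[v in v *m _]trmxK mulTmx_gt0 // trmx_eq0.
have vvE := mx11_scalar (v *m v^T); move: N0 vvE; set N := _ 0 0 => N0 vvE.
exists r, ((Num.sqrt N)^-1 *: v^T); split.
  rewrite [(_ *: _)^T]linearZ /= trmxK -scalemxAl -scalemxAr scalerA -invfM -expr2.
  by rewrite sqr_sqrtr ?ltW // vvE scale_scalar_mx mulVf ?gt_eqF.
by rewrite -scalemxAr -[S]Ssym -trmx_mul vS linearZ scalerA mulrC -scalerA.
Qed.

Lemma sym_e0_block n (T : 'M[R]_(1 + n)) (r : R) :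
  T^T = T -> T *m e0 n = r *: e0 n -> T = block_mx r%:M 0 0 (drsubmx T).
Proof.
move=> Tsym Te0.
have /eq_col_mx[ulT dlT] : col_mx (ulsubmx T) (dlsubmx T) = col_mx r%:M 0.
  rewrite -scalemx1 -(scaler0 _ r) -scale_col_mx -Te0 -[T in RHS]submxK.
  by rewrite mul_block_col !mulmx1 !mulmx0 !addr0.
by rewrite -[T in LHS]submxK ulT dlT -[ursubmx T]trmxK trmx_ursub Tsym dlT trmx0.
Qed.

Theorem sym_spectral n (S : 'M[R]_n) : S^T = S ->
  exists U (d : 'rV[R]_n), U^T *m U = 1%:M /\ S = U *m diag_mx d *m U^T.
Proof.
elim: n S => [|n IH] S Ssym.
  by exists 1%:M, 0; rewrite trmx1 mulmx1 [S]flatmx0 [_ *m _]flatmx0.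
have [r [u [u1 Su]]] := sym_unit_eigenvector Ssym.
have [Q [QQ Qe0]] := orthomx_e0 u1.
pose T := Q^T *m S *m Q.
have Tsym : T^T = T by rewrite /T !trmx_mul trmxK Ssym mulmxA.
have TE : T = block_mx r%:M 0 0 (drsubmx T).
  apply: sym_e0_block => //.
  by rewrite /T -!mulmxA Qe0 Su -scalemxAr -Qe0 mulmxA QQ mul1mx.
have drT : (drsubmx T)^T = drsubmx T by rewrite trmx_drsub Tsym.
have [U' [d' [UU' dE]]] := IH _ drT.
pose W : 'M[R]_(1 + n) := block_mx 1%:M 0 0 U'.
have WT : W^T = block_mx 1%:M 0 0 U'^T by rewrite tr_block_mx trmx1 !trmx0.
have WW : W^T *m W = 1%:M.
  by rewrite WT mulmx_block !mulmx0 !mul0mx !mulmx1 !addr0 !add0r UU' scalar_mx_block.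
have TW : T = W *m diag_mx (row_mx r%:M d') *m W^T.
  rewrite TE dE WT diag_mx_row !mulmx_block !mulmx0 !mul0mx !mulmx1 !mul1mx !addr0 !add0r.
  by congr block_mx; [apply/matrixP => i j; rewrite !ord1 !mxE | rewrite mul0mx].
have SE : S = Q *m W *m diag_mx (row_mx r%:M d') *m (Q *m W)^T :> 'M_(1 + n).
  transitivity (Q *m T *m Q^T); last by rewrite TW trmx_mul !mulmxA.
  by rewrite /T !mulmxA (mulmx1C QQ) mul1mx -mulmxA (mulmx1C QQ) mulmx1.
exists (Q *m W), (row_mx r%:M d'); split => //.
by rewrite trmx_mul mulmxA -[_ *m Q^T *m Q]mulmxA QQ mulmx1 WW.
Qed.

End RealSpectral.

Section Loewner.
Variable R : realType.

Lemma eigdecP n (S : 'M[R]_n) : S^T = S ->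
  (eigdec S).1^T *m (eigdec S).1 = 1%:M /\
  S = (eigdec S).1 *m diag_mx (eigdec S).2 *m (eigdec S).1^T.
Proof.
move=> /sym_spectral[U [d Ud]].
exact: (@xgetI _ _
  [set p | p.1^T *m p.1 = 1%:M /\ S = p.1 *m diag_mx p.2 *m p.1^T] (U, d)).
Qed.

Lemma vnormZ n a (x : 'cV[R]_n) : vnorm (a *: x) = `|a| * vnorm x.
Proof.
rewrite /vnorm -sqrtr_sqr -sqrtrM ?sqr_ge0 // mulr_sumr.
by congr Num.sqrt; apply: eq_bigr => i _; rewrite mxE exprMn.
Qed.

Lemma vnorm_gt0 n (x : 'cV[R]_n) : x != 0 -> 0 < vnorm x.
Proof. by move=> x0; rewrite sqrtr_gt0 -mulTmx_self mulTmx_gt0. Qed.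

Lemma vnorm_le1 n (x : 'cV[R]_n) i : vnorm x = 1 -> `|x i 0| <= 1.
Proof.
move=> x1; rewrite -(ler_pXn2r (_ : (0 < 2)%N)) ?nnegrE // expr1n real_normK ?num_real //.
have <- : \sum_j x j 0 ^+ 2 = 1.
  rewrite -[LHS]sqr_sqrtr ?sumr_ge0 // => [|j _]; last exact: sqr_ge0.
  by rewrite -/(vnorm x) x1 expr1n.
by rewrite (bigD1 i) //= lerDl sumr_ge0 // => j _; rewrite sqr_ge0.
Qed.

Lemma has_ubound_specnorm n m (M : 'M[R]_(n, m)) :
  has_ubound [set vnorm (M *m x) | x in [set x : 'cV[R]_m | vnorm x = 1]].
Proof.
exists (Num.sqrt (\sum_i (\sum_j `|M i j|) ^+ 2)) => _ [x /= x1 <-].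
rewrite ler_sqrt ?sumr_ge0 // => [|i _]; last exact: sqr_ge0.
apply: ler_sum => i _; rewrite -real_normK ?num_real // lerXn2r ?nnegrE ?sumr_ge0 //.
rewrite mxE (le_trans (ler_norm_sum _ _ _)) // ler_sum // => j _.
by rewrite normrM ler_piMr ?vnorm_le1.
Qed.

Lemma eigenvalue_le_specnorm n (M : 'M[R]_n) (w : 'cV[R]_n) m :
  w != 0 -> M *m w = m *: w -> `|m| <= specnorm M.
Proof.
move=> w0 Mw; apply: ub_le_sup (has_ubound_specnorm M) _ _.
have wn0 := vnorm_gt0 w0.
exists ((vnorm w)^-1 *: w); first by rewrite /= vnormZ gtr0_norm ?invr_gt0 ?mulVf ?gt_eqF.
rewrite -scalemxAr Mw scalerA vnormZ normrM gtr0_norm ?invr_gt0 //.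
by rewrite mulrAC mulVf ?mul1r ?gt_eqF.
Qed.

Lemma loewner_scalar_eigenvalue n (M : 'M[R]_n) c (w : 'cV[R]_n) m :
  loewner c%:M M -> w != 0 -> M *m w = m *: w -> c <= m.
Proof.
move=> [_ /(_ w)] + w0 Mw; rewrite -mulmxA mulmxBl Mw mul_scalar_mx -scalerBl.
by rewrite -scalemxAr mxE pmulr_lge0 ?mulTmx_gt0 // subr_ge0.
Qed.

Lemma loewner_scalar_unitmx n (M : 'M[R]_n) c :
  0 < c -> loewner c%:M M -> M \in unitmx.
Proof.
move=> c0 [_ Mc]; rewrite unitmxE unitfE; apply/negP => /det0P[v v0 vM].
have := Mc v^T; rewrite trmxK mulmxBr vM sub0r mul_mx_scalar mulNmx -scalemxAl.
by rewrite mxE oppr_ge0 mxE pmulr_rle0 // -{1}[v]trmxK leNgt mulTmx_gt0 ?trmx_eq0.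
Qed.

Lemma psd_conj_diag n (Y : 'M[R]_n) (w : 'rV[R]_n) :
  (forall i, 0 <= w 0 i) -> psd (Y^T *m diag_mx w *m Y).
Proof.
move=> w0; split; first by rewrite !trmx_mul trmxK tr_diag_mx mulmxA.
move=> x; have -> : x^T *m (Y^T *m diag_mx w *m Y) *m x =
    (Y *m x)^T *m diag_mx w *m (Y *m x) by rewrite trmx_mul !mulmxA.
rewrite mul_mx_diag mxE sumr_ge0 // => i _.
by rewrite !mxE mulrAC mulr_ge0 // -expr2 sqr_ge0.
Qed.

Lemma invmx_conj_diag n (X : 'M[R]_n) (g : 'rV[R]_n) :
  X \in unitmx -> (forall i, g 0 i != 0) ->
  invmx (X *m diag_mx g *m X^T) =
  (invmx X)^T *m diag_mx (\row_i (g 0 i)^-1) *m invmx X.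
Proof.
move=> Xu g0; set B := _ *m invmx X.
have AB : X *m diag_mx g *m X^T *m B = 1%:M.
  rewrite /B trmx_inv !mulmxA -[_ *m X^T *m _]mulmxA mulmxV ?unitmx_tr // mulmx1.
  rewrite -[X *m diag_mx g *m _]mulmxA mulmx_diag.
  rewrite (_ : \row_j _ = const_mx 1) ?diag_const_mx ?mulmx1 ?mulmxV //.
  by apply/rowP => j; rewrite !mxE mulfV.
have [Au _] := mulmx1_unit AB.
by rewrite -[B](mulKmx Au) AB mulmx1.
Qed.

Lemma loewner_invmx_diff_diag n (X : 'M[R]_n) (mu g : 'rV[R]_n) h :
  X \in unitmx -> X^T *m X = diag_mx mu -> (forall i, 0 < g 0 i) ->
  (forall i, 0 <= h * mu 0 i - 1 + (g 0 i)^-1) ->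
  loewner (invmx (X *m X^T) - invmx (X *m diag_mx g *m X^T)) h%:M.
Proof.
move=> Xu XX g0 gap; set Y := invmx X.
have hE : h%:M = Y^T *m (h *: diag_mx mu) *m Y.
  rewrite -XX -scalemxAr -scalemxAl /Y trmx_inv !mulmxA.
  by rewrite mulVmx ?unitmx_tr // mul1mx mulmxV // scalemx1.
have -> : X *m X^T = X *m diag_mx (const_mx 1) *m X^T by rewrite diag_const_mx mulmx1.
rewrite /loewner hE !invmx_conj_diag // => [|i|i]; rewrite ?mxE ?oner_neq0 ?gt_eqF //.
rewrite -/Y -!mulmxBl -!mulmxBr.
set D := (X in psd (_ *m X *m _)).
have -> : D = diag_mx (\row_i (h * mu 0 i - 1 + (g 0 i)^-1)).
  apply/matrixP => i j; rewrite !mxE; case: (i == j); rewrite ?mulr1n ?mulr0n ?invr1; ring.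
by apply: psd_conj_diag => i; rewrite mxE.
Qed.

Lemma loewner_diag_bounds n (X : 'M[R]_n) (mu : 'rV[R]_n) c i :
  X \in unitmx -> X^T *m X = diag_mx mu -> loewner c%:M (X *m X^T) ->
  c <= mu 0 i <= specnorm (X *m X^T).
Proof.
move=> Xu XX Xc; pose w : 'cV_n := X *m delta_mx i 0.
have w0 : w != 0.
  apply/eqP => /(congr1 (mulmx (invmx X))); rewrite mulKmx // mulmx0.
  by move=> /matrixP/(_ i 0); rewrite !mxE !eqxx => /eqP; rewrite oner_eq0.
have Xw : X *m X^T *m w = mu 0 i *: w.
  have Dd : diag_mx mu *m delta_mx i 0 = mu 0 i *: (delta_mx i 0 : 'cV_n).
    by apply/matrixP => j k; rewrite mul_diag_mx !mxE ord1; case: eqP => [->|]; rewrite ?mulr0.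
  by rewrite /w -mulmxA [X^T *m _]mulmxA XX Dd scalemxAr.
rewrite (loewner_scalar_eigenvalue Xc w0 Xw) /=.
exact: le_trans (real_ler_norm (num_real _)) (eigenvalue_le_specnorm w0 Xw).
Qed.

Lemma loewner_invmx_diff_mfun n (L : 'M[R]_n) (f : R -> R) (a b c h : R) :
  L \in unitmx -> b != 0 -> loewner c%:M (L *m L^T) ->
  (forall x, c <= x <= specnorm (L *m L^T) ->
     0 < f (a + b * x) /\ 0 <= h * x - 1 + (f (a + b * x))^-1) ->
  loewner (invmx (L *m L^T) - invmx (L *m mfun f (a%:M + b *: (L^T *m L)) *m L^T))
    h%:M.
Proof.
move=> Lu b0 Lc fx; set K := L^T *m L.
have Msym : (a%:M + b *: K)^T = a%:M + b *: K.
  by rewrite raddfD /= [(b *: _)^T]linearZ /= trmx_mul trmxK tr_scalar_mx.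
rewrite /mfun; have := eigdecP Msym; case: (eigdec _) => U d /= [UU ME].
pose mu := \row_i ((d 0 i - a) / b).
have dE i : d 0 i = a + b * mu 0 i by rewrite mxE; field.
have Uu : U \in unitmx by case: (mulmx1_unit UU) => _.
have XX : (L *m U)^T *m (L *m U) = diag_mx mu.
  have -> : diag_mx mu = b^-1 *: (diag_mx d - a%:M).
    by apply/matrixP => i j; rewrite !mxE; case: (i == j); rewrite ?mulr1n ?mulr0n; field.
  have -> : diag_mx d = U^T *m (a%:M + b *: K) *m U.
    by rewrite ME !mulmxA UU mul1mx -mulmxA UU mulmx1.
  rewrite mulmxDr mulmxDl mul_mx_scalar -scalemxAl UU scalemx1 addrC addKr.
  by rewrite -scalemxAr -scalemxAl scalerA mulVf // scale1r trmx_mul !mulmxA.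
have LLX : L *m L^T = (L *m U) *m (L *m U)^T.
  by rewrite trmx_mul mulmxA -[L *m U *m _]mulmxA (mulmx1C UU) mulmx1.
have LVX : L *m (U *m diag_mx (map_mx f d) *m U^T) *m L^T =
           (L *m U) *m diag_mx (map_mx f d) *m (L *m U)^T by rewrite trmx_mul !mulmxA.
have Xu : L *m U \in unitmx by rewrite unitmx_mul Lu Uu.
rewrite LVX LLX in Lc fx *; apply: (loewner_invmx_diff_diag Xu XX) => i;
  by rewrite [map_mx f d 0 i]mxE dE; have [] := fx _ (loewner_diag_bounds i Xu XX Lc).
Qed.

End Loewner.

(* The hypothesis is convexity of f between 0 and x, with f 0 = 1; the conclusion
   says that the chord slope (1 - f x) / x is at most (1 - f a) / a. *)
Lemma chord_gap (R : realFieldType) (a x fa fx : R) : 0 < a <= x ->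
  fa <= (1 - a / x) + a / x * fx -> 0 <= (1 - fa) / a * x - 1 + fx.
Proof.
move=> /andP[a0 ax] hf; have x0 := lt_le_trans a0 ax.
have -> : (1 - fa) / a * x - 1 + fx = x / a * (1 - a / x + a / x * fx - fa).
  by field; rewrite !gt_eqF.
by rewrite mulr_ge0 ?subr_ge0 // divr_ge0 // ltW.
Qed.

Section ConvexGaps.
Variable R : realType.

Lemma powR_gap (p k a x : R) : 1 <= p -> 0 < a <= x -> k * x < 1 ->
  0 < (1 - k * x) `^ (- p) /\
  0 <= (1 - (1 - k * a) `^ p) / a * x - 1 + ((1 - k * x) `^ (- p))^-1.
Proof.
move=> p1 /andP[a0 ax] kx; have x0 := lt_le_trans a0 ax.
have s0 : 0 <= a / x by rewrite divr_ge0 ?ltW.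
have s1 : a / x <= 1 by rewrite ler_pdivrMr // mul1r.
split; first by rewrite powR_gt0 // subr_gt0.
rewrite powRN invrK; apply: chord_gap; first by rewrite a0.
have -> : 1 - k * a = a / x * (1 - k * x) + (1 - a / x) * 1 by field; rewrite gt_eqF.
have : (a / x * (1 - k * x) + (1 - a / x) * 1) `^ p <=
       a / x * (1 - k * x) `^ p + (1 - a / x) * 1 `^ p.
  apply: (convex_powR p1 (Itv01 s0 s1)); rewrite ?inE /= ?in_itv /= ?ler01 //.
  by rewrite subr_ge0 ltW.
by rewrite powR1 mulr1; lra.
Qed.

Lemma expR_gap (t a x : R) : 0 < a <= x ->
  0 < expR (t * x) /\
  0 <= (1 - expR (- (t * a))) / a * x - 1 + (expR (t * x))^-1.
Proof.
move=> /andP[a0 ax]; have x0 := lt_le_trans a0 ax.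
have s0 : 0 <= a / x by rewrite divr_ge0 ?ltW.
have s1 : a / x <= 1 by rewrite ler_pdivrMr // mul1r.
split; first exact: expR_gt0.
rewrite -expRN; apply: chord_gap; first by rewrite a0.
have -> : - (t * a) = a / x * - (t * x) + (1 - a / x) * 0 by field; rewrite gt_eqF.
have : expR (a / x * - (t * x) + (1 - a / x) * 0) <=
       a / x * expR (- (t * x)) + (1 - a / x) * expR 0.
  exact: (convex_expR (Itv01 s0 s1)).
by rewrite expR0 mulr1; lra.
Qed.

End ConvexGaps.

Theorem lemma3 (R : realType) (n m p : nat)
  (hn : (0 < n)%N) (hm : (0 < m)%N) (hp : (0 < p)%N)
  (A : 'M[R]_n) (B : 'M[R]_(n, m)) (C : 'M[R]_(p, n)) (D : 'M[R]_(p, m))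
  (hD : pd (D *m D^T)) (hBD : B *m D^T = 0)
  (tau c : R) (htau0 : 0 <= tau) (htau1 : tau <= 1) (hc : 0 < c)
  (P V : nat -> 'M[R]_n) (theta : nat -> R)
  (hV0 : pd (V 0%N))
  (hP : forall k, P k.+1 =
          A *m invmx (invmx (V k) + C^T *m invmx (D *m D^T) *m C) *m A^T
          + B *m B^T)
  (htheta : forall k, 0 < theta k /\
          theta k * (1 - tau) * specnorm (P k.+1) < 1 /\
          gamma tau (P k.+1) (theta k) = c)
  (hV : forall k, exists L : 'M[R]_n,
          P k.+1 = L *m L^T /\ V k.+1 = Vnext tau L (theta k))
  (k : nat) (dbar : R) (hdbar : 0 < dbar)
  (hPd : loewner (dbar%:M) (P k.+1)) :
  loewner (invmx (P k.+1) - invmx (V k.+1))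
    ((if tau < 1 then
        (1 - powR (1 - theta k * (1 - tau) * dbar) (1 / (1 - tau))) / dbar
      else (1 - expR (- (theta k * dbar))) / dbar)%:M).
Proof.
have [th0 [thP _]] := htheta k; have [L [PL ->]] := hV k.
rewrite PL in hPd thP *; rewrite /Vnext.
have /andP[Lu _] : (L \in unitmx) && (L^T \in unitmx).
  by rewrite -unitmx_mul (loewner_scalar_unitmx hdbar hPd).
case: ifP => tau1.
  have p1 : 1 <= 1 / (1 - tau) by rewrite ler_pdivlMr ?subr_gt0 // mul1r gerBl.
  have -> : 1 / (tau - 1) = - (1 / (1 - tau)) by rewrite -mulrN -invrN opprB.
  rewrite -scaleNr; apply: loewner_invmx_diff_mfun hPd _ => //.
    by rewrite oppr_eq0 mulf_neq0 ?gt_eqF ?subr_gt0.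
  move=> x /andP[dx xP]; rewrite mulNr; apply: powR_gap; rewrite ?hdbar ?dx //.
  by apply: le_lt_trans thP; rewrite ler_wpM2l // mulr_ge0 ?subr_ge0 ?ltW.
rewrite -[theta k *: _]add0r -(raddf0 (@scalar_mx R n)).
apply: loewner_invmx_diff_mfun hPd _ => //; first by rewrite gt_eqF.
by move=> x /andP[dx _]; rewrite add0r; apply: expR_gap; rewrite hdbar dx.
Qed.
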